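(* Suppose $p=2$, and let $E\subseteq\mathcal F(\Lambda,\bar K)$ be a nonzero translation-invariant subspace of finite dimension. Then there exists a nonzero function $h\in E^0$ whose period lattice $\Lambda(h)$ is characteristic, i.e. of odd index in $\Lambda$.
   Context: $K=\mathrm{GF}(2^r)$, $\bar K$ an algebraic closure; $\Lambda$ is a lattice (free abelian group of finite rank); $\mathcal F(\Lambda,\bar K)$ is the space of all functions $\Lambda\to\bar K$; translation-invariant means stable under all $f\mapsto f(\cdot+v)$, $v\in\Lambda$. $E^0$ is the span of all characters (homomorphisms $\Lambda\to\bar K^\times$) lying in $E$. $\Lambda(h)=\{v\in\Lambda:h(\cdot+v)=h\}$. A sublattice is characteristic if it is an intersection of finitely many kernels of characters $\Lambda\to\bar K^\times$. *)

From mathcomp Require Import all_boot all_order all_algebra.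
Set Implicit Arguments.
Unset Strict Implicit.
Unset Printing Implicit Defensive.
Import GRing.Theory.
Local Open Scope ring_scope.

(* The lattice Lambda is modelled as Z^n = 'rV[int]_n.  Functions
   Lambda -> F are plain Rocq functions; subspaces are Prop-valued
   predicates on them. *)
Section Defs.
Variables (n : nat) (F : fieldType).
Notation Lam := 'rV[int]_n.
Notation Fun := (Lam -> F).

(* F is an algebraic closure of GF(2^r): algebraically closed, of
   characteristic 2, and algebraic over its prime field, i.e. every element
   is a root of a monic integer polynomial mapped into F. *)
Definition alg_closure_char2 (F' : closedFieldType) : Prop :=
  (2%N \in [pchar F']) /\ forall x : F', integralOver (fun z : int => z%:~R) x.

Definition fzero : Fun := fun _ => 0.

Definition translate (f : Fun) (v : Lam) : Fun := fun x => f (x + v).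

Definition lincomb (s : seq Fun) (c : 'I_(size s) -> F) : Fun :=
  fun x => \sum_(i < size s) c i * (nth fzero s i) x.

Definition is_subspace (E : Fun -> Prop) : Prop :=
  E fzero /\
  (forall f g, E f -> E g -> E (fun x => f x + g x)) /\
  (forall (a : F) f, E f -> E (fun x => a * f x)).

Definition finite_dim (E : Fun -> Prop) : Prop :=
  exists s : seq Fun, forall f, E f <-> exists c, f = lincomb (s:=s) c.

Definition translation_invariant (E : Fun -> Prop) : Prop :=
  forall f v, E f -> E (translate f v).

Definition is_character (chi : Fun) : Prop :=
  (forall x, chi x != 0) /\ (forall x y, chi (x + y) = chi x * chi y).

Definition E0 (E : Fun -> Prop) (h : Fun) : Prop :=
  exists (s : seq Fun) (c : 'I_(size s) -> F),
    (forall i : 'I_(size s), is_character (nth fzero s i) /\ E (nth fzero s i)) /\ h = lincomb (s:=s) c.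

Definition period_lattice (h : Fun) (v : Lam) : Prop := translate h v = h.

Definition characteristic (L : Lam -> Prop) : Prop :=
  exists s : seq Fun, (forall i : 'I_(size s), is_character (nth fzero s i)) /\
    forall v, L v <-> (forall i : 'I_(size s), nth fzero s i v = 1).
End Defs.

From mathcomp Require Import all_boot all_order all_algebra.
From mathcomp Require Import ring.
From Stdlib Require Import FunctionalExtensionality Classical.
Set Implicit Arguments. Unset Strict Implicit. Unset Printing Implicit Defensive.
Import GRing.Theory.
Local Open Scope ring_scope.

(* Over an algebraically closed field, a finite-dimensional space of
   functions stable under the translations has a common eigenfunction for
   the translations by a finite list of vectors.  For a single translation
   by v, a nonzero f and its translates by 0, v, ..., kv are linearly
   dependent, so a nonzero polynomial in the shift operator kills f;
   peeling off its linear factors one at a time produces an eigenfunction.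
   Translations commute, so the joint eigenspaces found so far are stable
   under the next translation, and induction on the list works.  A common
   eigenfunction for the basis vectors of Z^n is nowhere zero, and
   normalised at 0 it is a character; the period lattice of a character is
   its kernel, hence characteristic. *)

Section ShiftPolynomial.
Variables (V : zmodType) (F : fieldType) (v : V).
Implicit Types (p : {poly F}) (f : V -> F) (x : V).

Definition shift_poly (p : {poly F}) (f : V -> F) (x : V) : F :=
  \sum_(i < size p) p`_i * f (x + v *+ i).

Lemma shift_poly_widen N p f x : (size p <= N)%N ->
  shift_poly p f x = \sum_(i < N) p`_i * f (x + v *+ i).
Proof.
move=> le_p_N; rewrite /shift_poly (big_ord_widen N (fun i => p`_i * f (x + v *+ i)) le_p_N) big_mkcond.
apply: eq_bigr => i _; case: ifP => // /negbT.
by rewrite -leqNgt => ?; rewrite nth_default // mul0r.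
Qed.

Lemma shift_poly_mulXsubC p r f x :
  shift_poly (p * ('X - r%:P)) f x =
  shift_poly p (fun y => f (y + v) - r * f y) x.
Proof.
have size_pXr : (size (p * ('X - r%:P))%R <= (size p).+1)%N.
  by apply: leq_trans (size_polyMleq _ _) _; rewrite size_XsubC addn2.
rewrite (shift_poly_widen f x size_pXr) (shift_poly_widen _ x (leqnn _)).
rewrite mulrBr.
under eq_bigr do rewrite coefB coefMX coefMC mulrBl.
rewrite sumrB big_ord_recl /= mul0r add0r big_ord_recr /=.
rewrite [p`_(size p)]nth_default // !mul0r addr0.
under [RHS]eq_bigr do rewrite mulrBr.
rewrite sumrB; congr (_ - _); last by apply: eq_bigr => i _; rewrite mulrA.
by apply: eq_bigr => i _; rewrite /bump /= add1n mulrS [v + _]addrC addrA.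
Qed.

End ShiftPolynomial.

Section ShiftEigenfunction.
Variables (V : zmodType) (F : closedFieldType) (v : V).
Variable W : (V -> F) -> Prop.
Hypothesis W_add : forall f g, W f -> W g -> W (fun x => f x + g x).
Hypothesis W_scale : forall a f, W f -> W (fun x => a * f x).
Hypothesis W_shift : forall f, W f -> W (fun x => f (x + v)).
Variables (k : nat) (S : 'I_k -> V -> F).
Hypothesis W_span : forall f, W f ->
  exists c : 'I_k -> F, forall x, f x = \sum_i c i * S i x.

Lemma W_shiftn f j : W f -> W (fun x => f (x + v *+ j)).
Proof.
move=> Wf; elim: j => [|j IHj].
  suff -> : (fun x => f (x + v *+ 0)) = f by [].
  by apply: functional_extensionality => x; rewrite mulr0n addr0.
suff -> : (fun x => f (x + v *+ j.+1)) = (fun x => f (x + v + v *+ j)).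
  exact: W_shift IHj.
by apply: functional_extensionality => x; rewrite mulrS addrA.
Qed.

Lemma shift_eigenfunction_of_annihilator (p : {poly F}) f :
  p != 0 -> W f -> f <> (fun _ => 0) -> (forall x, shift_poly v p f x = 0) ->
  exists g mu, [/\ W g, g <> (fun _ => 0) & forall x, g (x + v) = mu * g x].
Proof.
have [N] := ubnP (size p); elim: N p f => // N IHN p f size_p p_neq0 Wf f_neq0 pf0.
have [/eqP/size_poly1P [c c_neq0 def_p]|p_nonconst] := eqVneq (size p) 1%N.
  exfalso; apply: f_neq0; apply: functional_extensionality => x.
  move: (pf0 x); rewrite /shift_poly def_p size_polyC c_neq0 big_ord1 coefC /=.
  by rewrite mulr0n addr0 => /eqP; rewrite mulf_eq0 (negbTE c_neq0) => /eqP.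
have [r /factor_theorem [q def_p]] := closed_rootP p p_nonconst.
have q_neq0 : q != 0 by apply: contraNneq p_neq0 => q0; rewrite def_p q0 mul0r.
have size_q : (size q < N)%N.
  move: size_p; rewrite def_p size_mul ?polyXsubC_eq0 // size_XsubC.
  by rewrite addn2.
pose g y := f (y + v) + (- r) * f y.
have Wg : W g by apply: W_add; [apply: W_shift | apply: W_scale].
have [g0|g_neq0] := classic (g = fun _ => 0).
  exists f, r; split=> // x.
  have := congr1 (fun h => h x) g0; rewrite /g /= mulNr => /eqP.
  by rewrite subr_eq0 => /eqP.
apply: (IHN q g size_q q_neq0 Wg g_neq0) => x.
rewrite -(pf0 x) def_p shift_poly_mulXsubC.
by apply: eq_bigr => i _; rewrite /g mulNr.
Qed.

Lemma shift_annihilator f : W f ->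
  exists2 p : {poly F}, p != 0 & forall x, shift_poly v p f x = 0.
Proof.
move=> Wf.
have [C defC] := fin_all_exists (fun j : 'I_k.+1 => W_span (W_shiftn j Wf)).
pose M := \matrix_(j < k.+1, i < k) C j i.
have : kermx M != 0.
  rewrite kermx_eq0; apply/negP => /eqP rankM.
  by have := rank_leq_col M; rewrite rankM ltnn.
case/rowV0Pn => a /sub_kermxP aM a_neq0.
exists (\poly_(j < k.+1) a 0 (inord j)).
  apply: contraNneq a_neq0 => p0; apply/eqP/rowP => j.
  have := congr1 (fun q : {poly F} => q`_j) p0.
  by rewrite coef_poly ltn_ord inord_val coef0 mxE.
move=> x; rewrite (shift_poly_widen v f x (size_poly _ _)).
under eq_bigr do rewrite coef_poly ltn_ord inord_val defC mulr_sumr.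
rewrite exchange_big /= big1 // => i _.
have /= := congr1 (fun m : 'rV[F]_k => m 0 i) aM; rewrite !mxE => aMi.
transitivity ((\sum_j a 0 j * M j i) * S i x); last by rewrite aMi mul0r.
by rewrite mulr_suml; apply: eq_bigr => j _; rewrite mxE mulrA.
Qed.

Lemma shift_eigenfunction f : W f -> f <> (fun _ => 0) ->
  exists g mu, [/\ W g, g <> (fun _ => 0) & forall x, g (x + v) = mu * g x].
Proof.
move=> Wf f_neq0; have [p p_neq0 pf0] := shift_annihilator Wf.
exact: shift_eigenfunction_of_annihilator pf0.
Qed.

End ShiftEigenfunction.

Section CommonEigenfunction.
Variables (V : zmodType) (F : closedFieldType) (E : (V -> F) -> Prop).
Hypothesis E_add : forall f g, E f -> E g -> E (fun x => f x + g x).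
Hypothesis E_scale : forall a f, E f -> E (fun x => a * f x).
Hypothesis E_translate : forall f v, E f -> E (fun x => f (x + v)).
Variables (k : nat) (S : 'I_k -> V -> F).
Hypothesis E_span : forall f, E f ->
  exists c : 'I_k -> F, forall x, f x = \sum_i c i * S i x.
Variable f0 : V -> F.
Hypotheses (E_f0 : E f0) (f0_neq0 : f0 <> (fun _ => 0)).

Lemma common_eigenfunction (vs : seq V) :
  exists (lam : V -> F) f, [/\ E f, f <> (fun _ => 0) &
    forall w, w \in vs -> forall x, f (x + w) = lam w * f x].
Proof.
elim: vs => [|v vs [lam [f [Ef f_neq0 f_eigen]]]]; first by exists (fun _ => 0), f0.
pose W g := E g /\ forall w, w \in vs -> forall x, g (x + w) = lam w * g x.
have W_add g h : W g -> W h -> W (fun x => g x + h x).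
  move=> [Eg g_eigen] [Eh h_eigen]; split; first exact: E_add.
  by move=> w vs_w x; rewrite g_eigen // h_eigen // mulrDr.
have W_scale a g : W g -> W (fun x => a * g x).
  move=> [Eg g_eigen]; split; first exact: E_scale.
  by move=> w vs_w x; rewrite g_eigen // mulrCA.
have W_shift g : W g -> W (fun x => g (x + v)).
  move=> [Eg g_eigen]; split; first exact: E_translate.
  by move=> w vs_w x /=; rewrite addrAC (g_eigen w).
have [g [mu [[Eg g_eigen] g_neq0 g_v]]] :=
  shift_eigenfunction W_add W_scale W_shift (fun g Wg => E_span Wg.1)
    (conj Ef f_eigen) f_neq0.
exists (fun w => if w == v then mu else lam w), g; split=> // w.
by rewrite inE; case: eqP => [-> _ | _ /= vs_w]; [exact: g_v | exact: g_eigen].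
Qed.

End CommonEigenfunction.

Section QuasiPeriod.
Variables (V : zmodType) (F : fieldType) (f : V -> F).

Definition quasi_period (v : V) : Prop :=
  exists2 c : F, c != 0 & forall x, f (x + v) = c * f x.

Lemma quasi_period0 : quasi_period 0.
Proof. by exists 1 => [|x]; rewrite ?oner_neq0 // addr0 mul1r. Qed.

Lemma quasi_periodD v w : quasi_period v -> quasi_period w -> quasi_period (v + w).
Proof.
move=> [c c_neq0 f_v] [d d_neq0 f_w]; exists (d * c); first exact: mulf_neq0.
by move=> x; rewrite addrA f_w f_v mulrA.
Qed.

Lemma quasi_periodN v : quasi_period v -> quasi_period (- v).
Proof.
move=> [c c_neq0 f_v]; exists c^-1 => [|x]; first by rewrite invr_eq0.
by rewrite -[in RHS](subrK v x) f_v mulKf.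
Qed.

Lemma quasi_periodMn v m : quasi_period v -> quasi_period (v *+ m).
Proof.
move=> qp_v; elim: m => [|m IHm]; first by rewrite mulr0n; apply: quasi_period0.
by rewrite mulrS; apply: quasi_periodD.
Qed.

Lemma quasi_periodMz v z : quasi_period v -> quasi_period (v *~ z).
Proof.
case: z => m qp_v; first exact: quasi_periodMn.
by rewrite NegzE mulrNz; apply/quasi_periodN/quasi_periodMn.
Qed.

Lemma eigenfunction_quasi_period v c : f <> (fun _ => 0) ->
  (forall x, f (x + v) = c * f x) -> quasi_period v.
Proof.
move=> f_neq0 f_v; exists c => //; apply/eqP => c0; apply: f_neq0.
by apply: functional_extensionality => y; rewrite -(subrK v y) f_v c0 mul0r.
Qed.

Lemma quasi_period_total_neq0 : (forall v, quasi_period v) ->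
  f <> (fun _ => 0) -> forall x, f x != 0.
Proof.
move=> qp f_neq0 x; apply/eqP => fx0; apply: f_neq0.
apply: functional_extensionality => y; have [c _ f_yx] := qp (y - x).
by rewrite -(subrK x y) addrC f_yx fx0 mulr0.
Qed.

End QuasiPeriod.

Section Characters.
Variables (n : nat) (F : fieldType).
Implicit Types (f chi : 'rV[int]_n -> F) (E : ('rV[int]_n -> F) -> Prop).

Lemma quasi_period_rV f : (forall j, quasi_period f 'e_j) -> forall v, quasi_period f v.
Proof.
move=> qp_e v; rewrite (row_sum_delta v).
apply: (big_ind (quasi_period f)) => [||j _].
- exact: quasi_period0.
- exact: quasi_periodD.
have -> : v 0 j *: 'e_j = ('e_j : 'rV[int]_n) *~ v 0 j by rewrite -scaler_int intz.
exact: quasi_periodMz.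
Qed.

Lemma normalized_character f : f <> (fun _ => 0) ->
  (forall v, quasi_period f v) -> is_character (fun x => (f 0)^-1 * f x).
Proof.
move=> f_neq0 qp; have f_neq0x := quasi_period_total_neq0 qp f_neq0.
split=> [x | x y]; first by rewrite mulf_neq0 ?invr_eq0.
have [c _ f_y] := qp y; have := f_y 0; rewrite add0r f_y => ->.
by field; apply: f_neq0x.
Qed.

Lemma character0 chi : is_character chi -> chi 0 = 1.
Proof.
case=> chi_neq0 chiD; apply: (mulIf (chi_neq0 0)).
by rewrite mul1r -chiD addr0.
Qed.

Lemma character_neq0 chi : is_character chi -> chi <> (fun _ => 0).
Proof.
move=> chi_char chi0; have := character0 chi_char.
by rewrite chi0 => /eqP; rewrite eq_sym oner_eq0.
Qed.

Lemma period_lattice_character chi v : is_character chi ->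
  period_lattice chi v <-> chi v = 1.
Proof.
move=> chi_char; split=> [per_v | chi_v].
  by have /= := congr1 (fun g => g 0) per_v; rewrite /translate add0r character0.
by apply: functional_extensionality => x; rewrite /translate chi_char.2 chi_v mulr1.
Qed.

Lemma nth_seq1 chi (i : 'I_(size [:: chi])) : nth (@fzero n F) [:: chi] i = chi.
Proof. by case: i => [[]]. Qed.

Lemma characteristic_period_lattice chi : is_character chi ->
  characteristic F (period_lattice chi).
Proof.
move=> chi_char; exists [:: chi]; split=> [i | v]; first by rewrite nth_seq1.
rewrite period_lattice_character //.
by split=> [chi_v i | /(_ ord0)]; rewrite nth_seq1.
Qed.

Lemma character_E0 E chi : is_character chi -> E chi -> E0 E chi.
Proof.
move=> chi_char E_chi; exists [:: chi], (fun _ => 1); split.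
  by move=> i; rewrite nth_seq1.
by apply: functional_extensionality => x; rewrite /lincomb big_ord1 mul1r nth_seq1.
Qed.

End Characters.

Theorem lemma5p13 (F : closedFieldType) (n : nat)
  (E : ('rV[int]_n -> F) -> Prop) :
  alg_closure_char2 F ->
  is_subspace E -> finite_dim E -> translation_invariant E ->
  (exists f, E f /\ f <> (fun _ => 0)) ->
  exists h, E0 E h /\ h <> (fun _ => 0) /\ characteristic F (period_lattice h).
Proof.
move=> _ [_ [E_add E_scale]] [s E_lincomb] E_translate [f0 [E_f0 f0_neq0]].
have E_span f : E f ->
    exists c, forall x, f x = \sum_(i < size s) c i * nth (@fzero n F) s i x.
  by case/E_lincomb => c ->; exists c.
have [lam [f [Ef f_neq0 f_eigen]]] := common_eigenfunction E_add E_scale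
  E_translate E_span E_f0 f0_neq0 [seq 'e_j | j : 'I_n].
have qp_f : forall v, quasi_period f v.
  apply: quasi_period_rV => j; apply: (eigenfunction_quasi_period f_neq0).
  by apply: f_eigen; apply: map_f; rewrite mem_enum.
have chi_char := normalized_character f_neq0 qp_f.
exists (fun x => (f 0)^-1 * f x); split; last split.
- exact/character_E0/E_scale.
- exact: character_neq0.
- exact: characteristic_period_lattice.
Qed.
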